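(* Let $\mathcal M$ be a valid catalytic machine with work space $s=s(n)$ and catalytic space $c=c(n)$, where $\log n\le s\le c\le 2^s$, and fix an input $x$. Then $$\mathbb E_{\tau\in\{0,1\}^c}\big[|V(\mathcal G^0_{\mathcal M,x}(\mathrm{acc}_\tau))|\big]\le 2^s\quad\text{and}\quad \mathbb E_{\tau\in\{0,1\}^c}\big[|V(\mathcal G^0_{\mathcal M,x}(\mathrm{rej}_\tau))|\big]\le 2^s,$$ where $\tau$ is uniform.
   Context: A catalytic machine has a read-only input tape holding $x$, a work tape of length $s$ initialized to $0^s$, a catalytic tape of length $c$ initialized to arbitrary $\tau$; non-deterministic/randomized machines have at each step a 0-choice and a 1-choice of transition (deterministic transitions count as both). It is valid if for every $x,\tau$ and every sequence of choices it halts in finite time with catalytic tape $\tau$. Convention: all auxiliary configuration information (internal state, head positions) is recorded on the work tape, so every configuration is a pair $\langle\pi,u\rangle$ with catalytic tape content $\pi\in\{0,1\}^c$ and work tape content $u\in\{0,1\}^s$; the start configuration is $\langle\tau,0^s\rangle$, the unique accepting halt configuration is $\mathrm{acc}_\tau=\langle\tau,1\,1\,0^{s-2}\rangle$ and the unique rejecting halt configuration is $\mathrm{rej}_\tau=\langle\tau,1\,0\,0^{s-2}\rangle$. The configuration graph $\mathcal G_{\mathcal M,x}$ has all configurations as vertices and a directed edge from $v$ to $v'$ when $v'$ is reached from $v$ in one step, labeled by the choice bit(s) ($b$ for a $b$-choice, both 0 and 1 for deterministic steps). The $0$-graph $\mathcal G^0_{\mathcal M,x}$ is the undirected graph keeping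 only edges labeled $0$ and forgetting directions; $\mathcal G^0_{\mathcal M,x}(v)$ denotes the connected component of $v$ in it. *)

From mathcomp Require Import all_boot all_algebra.
Set Implicit Arguments. Unset Strict Implicit. Unset Printing Implicit Defensive.
Import GRing.Theory Num.Theory.

Notation ctape c := {ffun 'I_c -> bool}.
Notation wtape s := {ffun 'I_s -> bool}.
Notation cfg s c := (ctape c * wtape s)%type.

Definition zero_work (s : nat) : wtape s := [ffun => false].
Definition acc_work (s : nat) : wtape s := [ffun i => (val i == 0) || (val i == 1)].
Definition rej_work (s : nat) : wtape s := [ffun i => val i == 0].

Definition start_cfg s c (tau : ctape c) : cfg s c := (tau, zero_work s).
Definition acc_cfg s c (tau : ctape c) : cfg s c := (tau, acc_work s).
Definition rej_cfg s c (tau : ctape c) : cfg s c := (tau, rej_work s).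

Definition is_halt s c (v : cfg s c) : bool :=
  (v.2 == acc_work s) || (v.2 == rej_work s).

(* A machine on a fixed input is given by its one-step transition:
   step v b = Some v' means v' is reached from v by the b-choice
   (a deterministic step has step v false = step v true);
   step v b = None means v is a halting configuration (no transition). *)
Definition step_fun s c := cfg s c -> bool -> option (cfg s c).

Definition halts_exactly_at_halt s c (step : step_fun s c) : Prop :=
  forall v b, (step v b == None) = is_halt v.

Fixpoint exec s c (step : step_fun s c) (tau : ctape c) (f : nat -> bool) (k : nat)
  : option (cfg s c) :=
  match k with
  | 0 => Some (start_cfg s tau)
  | k'.+1 => obind (fun v => step v (f k')) (exec step tau f k')
  end.

Definition valid_run s c (step : step_fun s c) : Prop :=
  forall (tau : ctape c) (f : nat -> bool),
    exists k v, exec step tau f k = Some v /\ is_halt v /\ v.1 = tau.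

Definition valid_machine s c (step : step_fun s c) : Prop :=
  halts_exactly_at_halt step /\ valid_run step.

(* undirected 0-graph: edges labelled 0, directions forgotten *)
Definition zero_edge s c (step : step_fun s c) : rel (cfg s c) :=
  fun v w => (step v false == Some w) || (step w false == Some v).

Definition comp0 s c (step : step_fun s c) (v : cfg s c) : {set cfg s c} :=
  [set w | connect (zero_edge step) v w].

Definition Exp_unif (c : nat) (F : ctape c -> nat) : rat :=
  (\sum_(tau : ctape c) (F tau)%:R) / (#|{: ctape c}|)%:R.

(** The 0-edges of a machine form the graph of a partial function on
    configurations (at most one 0-successor each), and halting configurations
    are exactly its sinks.  Following 0-successors from any vertex of a
    connected component leads to one and the same sink, so every component
    contains at most one halting configuration.  Hence the components of the
    distinct sinks [acc_tau] are pairwise disjoint, their sizes add up to at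
    most the number [2^c * 2^s] of configurations, and averaging over the
    [2^c] choices of [tau] gives [2^s]; likewise for [rej_tau]. *)
From mathcomp Require Import all_boot all_algebra.
Set Implicit Arguments. Unset Strict Implicit. Unset Printing Implicit Defensive.
Import GRing.Theory Num.Theory.
Local Open Scope ring_scope.

Lemma sum_card_pairwise_disjoint (I T : finType) (F : I -> {set T}) :
  (forall i j, i != j -> [disjoint F i & F j]) -> (\sum_i #|F i| <= #|T|)%N.
Proof.
move=> disjF; rewrite -sum1_card.
under eq_bigr => i _ do rewrite -sum1_card.
rewrite (exchange_big_dep xpredT) //; apply: leq_sum => w _.
rewrite sum1_card; apply/card_le1_eqP => i j Fiw Fjw; apply/eqP.
by apply: contraLR (Fiw : w \in F i) => /disjF/disjointFr->.
Qed.

Section PartialFunctionGraph.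

Variables (T : finType) (f : T -> option T).

Definition opt_edge : rel T := fun v w => (f v == Some w) || (f w == Some v).

Definition opt_succ (v : T) : T := odflt v (f v).

Lemma opt_edge_sym : symmetric opt_edge.
Proof. by move=> v w; rewrite /opt_edge orbC. Qed.

Lemma fconnect_sink_step a v w : f a = None -> f v = Some w ->
  fconnect opt_succ v a = fconnect opt_succ w a.
Proof.
move=> fa fv; have va : v != a by apply: contraPneq fv => ->; rewrite fa.
by rewrite fconnect_eqVf (negbTE va) /opt_succ fv.
Qed.

Lemma closed_fconnect_sink a : f a = None ->
  closed opt_edge (fun v => fconnect opt_succ v a).
Proof.
move=> fa v w /orP[/eqP fv | /eqP fw]; first exact: fconnect_sink_step.
by symmetry; apply: fconnect_sink_step fw.
Qed.

Lemma connect_sinks_eq a b : f a = None -> f b = None ->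
  connect opt_edge a b -> a = b.
Proof.
move=> fa fb ab; have := closed_connect (closed_fconnect_sink fa) ab.
rewrite unfold_in /= connect0 => /esym /iter_findex.
by rewrite iter_fix // /opt_succ fb.
Qed.

Lemma sum_card_sink_components (I : finType) (h : I -> T) :
  injective h -> (forall i, f (h i) = None) ->
  (\sum_i #|[set w | connect opt_edge (h i) w]| <= #|T|)%N.
Proof.
move=> h_inj h_sink; apply: sum_card_pairwise_disjoint => i j.
apply: contraNT => /pred0Pn[w /andP[]]; rewrite !inE => hiw hjw.
apply/eqP/h_inj/connect_sinks_eq => //; apply: connect_trans hiw _.
by rewrite (sym_connect_sym opt_edge_sym).
Qed.

End PartialFunctionGraph.

Lemma Exp_unif_le (c : nat) (F : ctape c -> nat) (b : nat) :
  (\sum_tau F tau <= b * 2 ^ c)%N -> Exp_unif F <= b%:R.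
Proof.
have card_ctape : #|{: ctape c}| = (2 ^ c)%N by rewrite card_ffun card_bool card_ord.
rewrite /Exp_unif card_ctape -natr_sum ler_pdivrMr ?ltr0n ?expn_gt0 //.
by rewrite -natrM ler_nat.
Qed.

Lemma Exp_unif_comp0_sinks s c (step : step_fun s c) (h : ctape c -> cfg s c) :
  injective h -> (forall tau, step (h tau) false = None) ->
  Exp_unif (fun tau => #|comp0 step (h tau)|) <= (2 ^ s)%:R.
Proof.
move=> h_inj h_sink; apply: Exp_unif_le.
(* [zero_edge step] is [opt_edge (step^~ false)] by unfolding. *)
have := sum_card_sink_components (f := step^~ false) h_inj h_sink.
by rewrite card_prod !card_ffun !card_bool !card_ord mulnC.
Qed.

Lemma halt_step_none s c (step : step_fun s c) v b :
  halts_exactly_at_halt step -> is_halt v -> step v b = None.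
Proof. by move=> step_halt halt_v; apply/eqP; rewrite step_halt. Qed.

Theorem lemma4p7 (n s c : nat)
  (M : seq bool -> step_fun s c) (x : seq bool) :
  size x = n ->
  (trunc_log 2 n <= s)%N -> (s <= c)%N -> (c <= 2 ^ s)%N ->
  (forall x' : seq bool, size x' = n -> valid_machine (M x')) ->
  Exp_unif (fun tau : ctape c => #|comp0 (M x) (acc_cfg s tau)|) <= (2 ^ s)%:R /\
  Exp_unif (fun tau : ctape c => #|comp0 (M x) (rej_cfg s tau)|) <= (2 ^ s)%:R.
Proof.
move=> size_x _ _ _ /(_ x size_x) [step_halt _].
split; apply: Exp_unif_comp0_sinks => [t1 t2 [] // | tau].
- by apply: halt_step_none step_halt _; rewrite /is_halt eqxx.
- by apply: halt_step_none step_halt _; rewrite /is_halt eqxx orbT.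
Qed.
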